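(* Let $K$ be an algebraically closed field of characteristic $p>0$, $p\neq 2$, and $n\geq 4$. Let $G_\psi\subset\mathrm{Aut}_0K[x_1,\ldots,x_n]$ be the subgroup generated by $\mathrm{GL}_n(K)$ and the automorphism $\psi: x_1\mapsto x_1+x_2x_3$, $x_k\mapsto x_k$ ($k\neq 1$). Then $G_\psi$ contains: (i) for each $i=1,\ldots,n$, the automorphism $\psi_i: x_i\mapsto x_i+x_{i+1}x_{i+2}$, $x_k\mapsto x_k$ ($k\neq i$), with indices taken cyclically modulo $n$; and (ii) every automorphism $\varphi_{i,j,k,\beta}: x_i\mapsto x_i+\beta x_j^k$, $x_l\mapsto x_l$ ($l\neq i$), where $k\geq 1$, $\beta\in K$, $i,j\in\{1,\ldots,n\}$, $j\neq i$.
   Context: $\mathrm{Aut}_0 K[x_1,\ldots,x_n]$ is the group of origin-preserving $K$-algebra automorphisms of $K[x_1,\ldots,x_n]$; $\mathrm{GL}_n(K)$ is its subgroup of linear automorphisms $x_i\mapsto\sum_j a_{ij}x_j$. *)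

From HB Require Import structures.
From mathcomp Require Import all_boot all_order all_algebra.
From mathcomp Require Import mpoly.
Set Implicit Arguments. Unset Strict Implicit. Unset Printing Implicit Defensive.
Import GRing.Theory.
Local Open Scope ring_scope.

(* A K-algebra endomorphism of K[x_0,...,x_{n-1}] is represented by the
   n-tuple of images of the variables (0-based indices). *)
Definition endo (K : fieldType) (n : nat) := n.-tuple {mpoly K[n]}.

Definition eid (K : fieldType) (n : nat) : endo K n := [tuple 'X_i | i < n].

(* composition of algebra maps: (ecomp f g) = phi_f o phi_g,
   i.e. x_i |-> phi_f (g_i) = g_i(f_0,...,f_{n-1}) *)
Definition ecomp (K : fieldType) (n : nat) (f g : endo K n) : endo K n :=
  [tuple comp_mpoly f (tnth g i) | i < n].

Inductive gen_by (K : fieldType) (n : nat) (S : endo K n -> Prop) : endo K n -> Prop :=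
  | gen_base f : S f -> gen_by S f
  | gen_id : gen_by S (eid K n)
  | gen_comp f g : gen_by S f -> gen_by S g -> gen_by S (ecomp f g)
  | gen_inv f g : gen_by S f -> ecomp f g = eid K n -> ecomp g f = eid K n ->
                  gen_by S g.

Definition linear_endo (K : fieldType) (n : nat) (A : 'M[K]_n) : endo K n :=
  [tuple \sum_(j < n) A i j *: 'X_j | i < n].

Definition is_GL (K : fieldType) (n : nat) (f : endo K n) : Prop :=
  exists A : 'M[K]_n, A \in unitmx /\ f = linear_endo A.

Definition elem_endo (K : fieldType) (n : nat) (i : 'I_n) (q : {mpoly K[n]}) : endo K n :=
  [tuple (if k == i then 'X_k + q else 'X_k) | k < n].

Definition cyc (n : nat) (i : 'I_n) (s : nat) : 'I_n :=
  Ordinal (@ltn_pmod (i + s) n (leq_ltn_trans (leq0n i) (ltn_ord i))).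

Definition psi_i (K : fieldType) (n : nat) (i : 'I_n) : endo K n :=
  elem_endo i ('X_(cyc i 1) * 'X_(cyc i 2)).

Definition G_psi (K : fieldType) (n : nat) : endo K n -> Prop :=
  @gen_by K n (fun f => is_GL f \/ (exists i0 : 'I_n, i0 = 0 :> nat /\ f = @psi_i K n i0)).

(* G_psi is normalised by the permutation matrices, so it contains
   x_i |-> x_i + x_j x_l for every triple of distinct indices, in particular
   every psi_i.  For the powers, conjugating x_i |-> x_i + x_l x_m by
   x_l |-> x_l + s and composing with the inverse of x_i |-> x_i + x_l x_m gives
   x_i |-> x_i + s x_m; doing the same with x_m |-> x_m + x_j turns s x_m into
   s x_j.  With s = beta x_j^k this raises the exponent by one, starting from
   the linear maps x_i |-> x_i + beta x_j, and n >= 4 leaves room for the two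
   auxiliary indices l, m. *)

From HB Require Import structures.
From mathcomp Require Import all_boot all_order all_algebra all_fingroup.
From mathcomp Require Import mpoly.
Set Implicit Arguments. Unset Strict Implicit. Unset Printing Implicit Defensive.
Import GRing.Theory.
Local Open Scope ring_scope.

Lemma exists_perm3 (T : finType) (a b c x y z : T) :
  a != b -> a != c -> b != c -> x != y -> x != z -> y != z ->
  exists s : {perm T}, [/\ s a = x, s b = y & s c = z].
Proof.
move=> ab ac bc xy xz yz.
pose s1 := tperm a x; pose b1 := s1 b; pose c1 := s1 c.
have xb1 : x != b1 by rewrite -(tpermL a x) (inj_eq perm_inj).
have xc1 : x != c1 by rewrite -(tpermL a x) (inj_eq perm_inj).
have b1c1 : b1 != c1 by rewrite (inj_eq perm_inj).
pose s2 := tperm b1 y; pose c2 := s2 c1.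
have s2x : s2 x = x by apply: tpermD; rewrite eq_sym.
have xc2 : x != c2 by rewrite -s2x (inj_eq perm_inj).
have yc2 : y != c2 by rewrite -(tpermL b1 y) (inj_eq perm_inj).
pose s3 := tperm c2 z.
have s3x : s3 x = x by apply: tpermD; rewrite eq_sym.
have s3y : s3 y = y by apply: tpermD; rewrite eq_sym.
exists (s1 * s2 * s3)%g; rewrite !permM.
by split; [rewrite tpermL s2x | rewrite -/b1 tpermL | rewrite -/c1 -/c2 tpermL].
Qed.

Lemma exists_two_others (T : finType) (i j : T) : (4 <= #|T|)%N ->
  exists l m : T, [/\ l != i, l != j, m != i, m != j & l != m].
Proof.
move=> T4; have : (1 < #|~: [set i; j]|)%N.
  have := cardsC [set i; j]; rewrite cards2 => defT.
  by rewrite -(ltn_add2l (i != j).+1) defT; apply: leq_trans T4; case: (i != j).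
case/card_gt1P => l [m []]; rewrite !inE !negb_or => /andP[li lj] /andP[mi mj] lm.
by exists l, m.
Qed.

Lemma cyc_eq (n : nat) (i : 'I_n) (s t : nat) : (s < n)%N -> (t < n)%N ->
  (cyc i s == cyc i t) = (s == t).
Proof. by move=> sn tn; rewrite -val_eqE /= eqn_modDl !modn_small. Qed.

Lemma cyc0 (n : nat) (i : 'I_n) : cyc i 0 = i.
Proof. by apply: val_inj; rewrite /= addn0 modn_small. Qed.

Lemma cyc_neq (n : nat) (i : 'I_n) : (3 <= n)%N ->
  [/\ i != cyc i 1, i != cyc i 2 & cyc i 1 != cyc i 2].
Proof.
move=> n3; have lt_n k : (k < 3)%N -> (k < n)%N by move/leq_trans; apply.
by split; rewrite -?[i in i != _](cyc0 i) cyc_eq ?lt_n.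
Qed.

Section Elementary.
Variables (K : fieldType) (n : nat).
Implicit Types (f g : endo K n) (q r s t : {mpoly K[n]}).

Lemma comp_mpolyX_tnth f (k : 'I_n) : 'X_k \mPo f = tnth f k.
Proof. by rewrite comp_mpolyXU (tnth_nth 0). Qed.

Lemma tnth_ecomp f g k : tnth (ecomp f g) k = tnth g k \mPo f.
Proof. by rewrite tnth_mktuple. Qed.

Lemma tnth_elem_endo i q k :
  tnth (elem_endo i q) k = if k == i then 'X_k + q else 'X_k.
Proof. by rewrite tnth_mktuple. Qed.

Definition free_of i q := forall r, q \mPo elem_endo i r = q.

Lemma free_ofX i (m : 'I_n) : m != i -> free_of i 'X_m.
Proof. by move=> mi r; rewrite comp_mpolyX_tnth tnth_elem_endo (negbTE mi). Qed.

Lemma free_ofM i q r : free_of i q -> free_of i r -> free_of i (q * r).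
Proof. by move=> qi ri u; rewrite rmorphM /= qi ri. Qed.

Lemma free_ofN i q : free_of i q -> free_of i (- q).
Proof. by move=> qi u; rewrite rmorphN /= qi. Qed.

Lemma free_ofZ i c q : free_of i q -> free_of i (c *: q).
Proof. by move=> qi u; rewrite comp_mpolyZ qi. Qed.

Lemma free_ofXn i q d : free_of i q -> free_of i (q ^+ d).
Proof. by move=> qi u; rewrite rmorphXn /= qi. Qed.

Lemma elem_endo0 i : elem_endo i 0 = eid K n.
Proof.
by apply: eq_from_tnth => k; rewrite tnth_elem_endo tnth_mktuple addr0 if_same.
Qed.

Lemma elem_endoD i q r : free_of i r ->
  ecomp (elem_endo i q) (elem_endo i r) = elem_endo i (q + r).
Proof.
move=> ri; apply: eq_from_tnth => k; rewrite tnth_ecomp !tnth_elem_endo.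
case: (eqVneq k i) => [->|ki]; last by rewrite comp_mpolyX_tnth tnth_elem_endo (negbTE ki).
by rewrite rmorphD /= ri comp_mpolyX_tnth tnth_elem_endo eqxx addrA.
Qed.

Lemma elem_endo_conj i j s t : i != j -> free_of i s -> free_of j s ->
  ecomp (elem_endo j s) (ecomp (elem_endo i t) (elem_endo j (- s)))
  = elem_endo i (t \mPo elem_endo j s).
Proof.
move=> ij si sj; apply: eq_from_tnth => k; rewrite !tnth_ecomp !tnth_elem_endo.
case: (eqVneq k j) => [->|kj].
  rewrite eq_sym (negbTE ij) !rmorphB /= si sj.
  rewrite comp_mpolyX_tnth tnth_elem_endo eq_sym (negbTE ij).
  by rewrite comp_mpolyX_tnth tnth_elem_endo eqxx addrK.
rewrite comp_mpolyX_tnth tnth_elem_endo; case: (eqVneq k i) => [->|ki].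
  by rewrite rmorphD /= comp_mpolyX_tnth tnth_elem_endo (negbTE ij).
by rewrite comp_mpolyX_tnth tnth_elem_endo (negbTE kj).
Qed.

Lemma sum_scale_delta_mpolyX (u : 'I_n) :
  \sum_(l < n) ((u == l)%:R : K) *: ('X_l : {mpoly K[n]}) = 'X_u.
Proof.
rewrite (bigD1 u) //= eqxx scale1r big1 ?addr0 // => l /negbTE lu.
by rewrite eq_sym lu scale0r.
Qed.

Lemma elem_endo_linear (a b : 'I_n) (c : K) : a != b ->
  elem_endo a (c *: 'X_b) = linear_endo (1%:M + c *: delta_mx a b).
Proof.
move=> ab; apply: eq_from_tnth => k; rewrite !tnth_mktuple.
under eq_bigr do rewrite !mxE scalerDl -scalerA.
rewrite big_split /= sum_scale_delta_mpolyX -scaler_sumr.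
case: (eqVneq k a) => [->|ka] /=.
  by congr (_ + _ *: _); rewrite -(sum_scale_delta_mpolyX b); apply: eq_bigr => l _; rewrite eq_sym.
by rewrite big1 ?scaler0 ?addr0 // => l _; rewrite scale0r.
Qed.

Lemma unitmx_elementary (a b : 'I_n) (c : K) : a != b ->
  (1%:M + c *: delta_mx a b : 'M[K]_n) \in unitmx.
Proof.
move=> ab; apply: (proj1 (@mulmx1_unit _ _ _ (1%:M - c *: delta_mx a b) _)).
rewrite mulmxDl mulmxBr !mulmx1 mul1mx mulmxBr mulmx1 -scalemxAl -scalemxAr.
by rewrite mul_delta_mx_0 1?eq_sym // !scaler0 subr0 addrNK.
Qed.

Definition perm_endo (s : 'S_n) : endo K n := [tuple 'X_(s k) | k < n].

Lemma perm_endo_linear (s : 'S_n) : perm_endo s = linear_endo (perm_mx s).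
Proof.
apply: eq_from_tnth => k; rewrite !tnth_mktuple -sum_scale_delta_mpolyX.
by apply: eq_bigr => l _; rewrite perm_mxEsub !mxE.
Qed.

Lemma perm_endo_conj (s : 'S_n) i q :
  ecomp (ecomp (perm_endo s) (elem_endo i q)) (perm_endo s^-1)
  = elem_endo (s i) (q \mPo perm_endo s).
Proof.
apply: eq_from_tnth => k; rewrite tnth_ecomp tnth_mktuple comp_mpolyX_tnth.
rewrite tnth_ecomp !tnth_elem_endo (canF_eq (permKV s)).
by case: (k == s i); rewrite ?rmorphD /= comp_mpolyX_tnth tnth_mktuple permKV.
Qed.

Section GeneratedGroup.
Variable S : endo K n -> Prop.

Lemma gen_by_elemN i q : free_of i q ->
  gen_by S (elem_endo i q) -> gen_by S (elem_endo i (- q)).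
Proof.
move=> qi Sq; apply: (gen_inv Sq).
  by rewrite elem_endoD ?subrr ?elem_endo0 //; apply: free_ofN.
by rewrite elem_endoD // addNr elem_endo0.
Qed.

Lemma gen_by_elemB i q r : free_of i r ->
  gen_by S (elem_endo i q) -> gen_by S (elem_endo i r) ->
  gen_by S (elem_endo i (q - r)).
Proof.
move=> ri Sq Sr; rewrite -elem_endoD; last exact: free_ofN.
by apply: gen_comp => //; apply: gen_by_elemN.
Qed.

Lemma gen_by_elem_conj i j s t : i != j -> free_of i s -> free_of j s ->
  gen_by S (elem_endo j s) -> gen_by S (elem_endo i t) ->
  gen_by S (elem_endo i (t \mPo elem_endo j s)).
Proof.
move=> ij si sj Ss St; rewrite -elem_endo_conj //.
by do 2!apply: gen_comp => //; apply: gen_by_elemN.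
Qed.

Lemma gen_by_elem_subst i l s t : i != l ->
  free_of i s -> free_of l s -> free_of i t -> free_of l t ->
  gen_by S (elem_endo l s) -> gen_by S (elem_endo i ('X_l * t)) ->
  gen_by S (elem_endo i (s * t)).
Proof.
move=> il si sl ti tl Ss St.
have lti : free_of i ('X_l * t) by apply: free_ofM => //; apply: free_ofX; rewrite eq_sym.
have := gen_by_elemB lti (gen_by_elem_conj il si sl Ss St) St.
by rewrite rmorphM /= tl comp_mpolyX_tnth tnth_elem_endo eqxx mulrDl addrAC subrr add0r.
Qed.

End GeneratedGroup.

Lemma G_psi_linear (A : 'M[K]_n) : A \in unitmx -> G_psi (linear_endo A).
Proof. by move=> A_unit; apply: gen_base; left; exists A. Qed.

Lemma G_psi_elem_linear (a b : 'I_n) (c : K) : a != b ->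
  G_psi (elem_endo a (c *: 'X_b)).
Proof. by move=> ab; rewrite elem_endo_linear //; apply/G_psi_linear/unitmx_elementary. Qed.

Lemma G_psi_perm_conj (s : 'S_n) i q : G_psi (elem_endo i q) ->
  G_psi (elem_endo (s i) (q \mPo perm_endo s)).
Proof.
have Gs u : G_psi (perm_endo u) by rewrite perm_endo_linear; apply/G_psi_linear/unitmx_perm.
move=> Gq; rewrite -perm_endo_conj.
by apply: gen_comp; first apply: gen_comp; [exact: Gs | exact: Gq | exact: Gs].
Qed.

Lemma G_psi_elem_quadratic (i j l : 'I_n) : (3 <= n)%N ->
  i != j -> i != l -> j != l -> G_psi (elem_endo i ('X_j * 'X_l : {mpoly K[n]})).
Proof.
move=> n3 ij il jl; pose i0 : 'I_n := Ordinal (leq_trans (isT : (0 < 3)%N) n3).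
have [i0j0 i0l0 j0l0] := cyc_neq i0 n3.
have [s [<- <- <-]] := exists_perm3 i0j0 i0l0 j0l0 ij il jl.
have psi0 : G_psi (psi_i K i0) by apply: gen_base; right; exists i0.
have := G_psi_perm_conj s psi0.
by rewrite rmorphM /= !comp_mpolyX_tnth !tnth_mktuple.
Qed.

Lemma G_psi_elem_power (i j : 'I_n) (d : nat) (beta : K) : (4 <= n)%N -> j != i ->
  G_psi (elem_endo i (beta *: 'X_j ^+ d.+1)).
Proof.
move=> n4; elim: d i => [|d IH] i ji.
  by rewrite expr1; apply: G_psi_elem_linear; rewrite eq_sym.
have [l [m [li lj mi mj lm]]] :
    exists l m : 'I_n, [/\ l != i, l != j, m != i, m != j & l != m].
  by apply: exists_two_others; rewrite card_ord.
pose s := beta *: 'X_j ^+ d.+1.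
have s_free a : j != a -> free_of a s.
  by move=> ja; apply: free_ofZ; apply: free_ofXn; apply: free_ofX.
have [il im] : i != l /\ i != m by split; rewrite eq_sym.
have [jl jm ml] : [/\ j != l, j != m & m != l] by split; rewrite eq_sym.
have Gsm : G_psi (elem_endo i (s * 'X_m)).
  apply: (gen_by_elem_subst il (s_free i ji) (s_free l jl) (free_ofX mi) (free_ofX ml)).
    exact: IH.
  exact: G_psi_elem_quadratic (ltnW n4) il im lm.
have Gm : G_psi (elem_endo m ('X_j : {mpoly K[n]})).
  by have := G_psi_elem_linear 1 mj; rewrite scale1r.
rewrite exprS scalerAr -/s; move: Gsm; rewrite mulrC.
exact: (gen_by_elem_subst im (free_ofX ji) (free_ofX jm) (s_free i ji) (s_free m jm) Gm).
Qed.

End Elementary.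

Theorem mainTheorem4 (K : closedFieldType) (p : nat) (n : nat)
  (hp : p \in [pchar K]) (hp2 : p != 2%N) (hn : (4 <= n)%N) :
  (forall i : 'I_n, @G_psi K n (@psi_i K n i)) /\
  (forall (i j : 'I_n) (k : nat) (beta : K), (1 <= k)%N -> j != i ->
     @G_psi K n (@elem_endo K n i (beta *: 'X_j ^+ k))).
Proof.
split=> [i | i j [|d] beta // _ ji].
- by have [] := cyc_neq i (ltnW hn); apply: G_psi_elem_quadratic (ltnW hn).
- exact: G_psi_elem_power.
Qed.
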